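(* Let $\Gamma=(V,E)$ be a locally finite reflexive relation. If $F_1$ and $F_2$ are weak fragments of $\Gamma$ with $F_1\cap F_2\neq\emptyset$, then $F_1\cup F_2$ and $F_1\cap F_2$ are weak fragments. In particular, two distinct weak atoms are disjoint. Assume furthermore that $\Gamma$ is point-transitive. Then the weak atoms of $\Gamma$ form a partition of $V$, and for any weak atom $A$ the subrelation $\Gamma[A]$ induced on $A$ is point-transitive.
   Context: A relation is a pair $\Gamma=(V,E)$ with $E\subset V\times V$; for $X\subset V$, $\Gamma(X)=\{y: (x,y)\in E \text{ for some } x\in X\}$, $\Gamma^-(X)=\{y:(y,x)\in E\text{ for some }x\in X\}$, $\Gamma(x)=\Gamma(\{x\})$. $\Gamma$ is reflexive if $(x,x)\in E$ for all $x$, and locally finite if $\Gamma(x)$ and $\Gamma^-(x)$ are finite for all $x\in V$. Write $\partial(X)=\Gamma(X)\setminus X$. An automorphism is a bijection $f:V\to V$ with $\Gamma(f(x))=f(\Gamma(x))$ for all $x$; $\Gamma$ is point-transitive if for all $x,y\in V$ there is an automorphism $f$ with $f(x)=y$. The induced subrelation on $X$ is $\Gamma[X]=(X,(X\times X)\cap E)$. The weak connectivity is $\kappa(\Gamma)=\min\{|\partial(X)| : 1\le |X|<\infty\}$; a weak fragment is a set $X$ with $1\le|X|<\infty$ and $|\partial(X)|=\kappa(\Gamma)$; a weak atom is a weak fragment of minimum cardinality. *)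

From Stdlib Require Import List.
Import ListNotations.

Section Defs.
Context {V : Type}.

Definition has_card (X : V -> Prop) (n : nat) : Prop :=
  exists l : list V, NoDup l /\ length l = n /\ forall x, X x <-> In x l.

Definition finite_set (X : V -> Prop) : Prop := exists n, has_card X n.

Definition nonempty (X : V -> Prop) : Prop := exists x, X x.

Definition same_set (X Y : V -> Prop) : Prop := forall x, X x <-> Y x.

Definition disjoint (X Y : V -> Prop) : Prop := forall x, ~ (X x /\ Y x).

Definition setU (X Y : V -> Prop) : V -> Prop := fun x => X x \/ Y x.
Definition setI (X Y : V -> Prop) : V -> Prop := fun x => X x /\ Y x.

Variable E : V -> V -> Prop.

Definition image (X : V -> Prop) : V -> Prop := fun y => exists x, X x /\ E x y.

Definition boundary (X : V -> Prop) : V -> Prop := fun y => image X y /\ ~ X y.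

Definition reflexive_rel : Prop := forall x, E x x.

Definition locally_finite : Prop :=
  forall x, finite_set (fun y => E x y) /\ finite_set (fun y => E y x).

Definition weak_fragment (X : V -> Prop) : Prop :=
  nonempty X /\ finite_set X /\
  exists k, has_card (boundary X) k /\
    forall Y m, nonempty Y -> finite_set Y -> has_card (boundary Y) m -> k <= m.

Definition weak_atom (A : V -> Prop) : Prop :=
  weak_fragment A /\
  exists a, has_card A a /\
    forall F f, weak_fragment F -> has_card F f -> a <= f.

End Defs.

(* automorphism: bijection f with Γ(f x) = f(Γ(x)) for all x *)
Definition automorphism {W : Type} (E : W -> W -> Prop) (f : W -> W) : Prop :=
  (exists g : W -> W, (forall x, g (f x) = x) /\ (forall y, f (g y) = y)) /\
  forall x y, E (f x) y <-> exists z, E x z /\ y = f z.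

Definition point_transitive {W : Type} (E : W -> W -> Prop) : Prop :=
  forall x y : W, exists f, automorphism E f /\ f x = y.

Definition induced {V : Type} (E : V -> V -> Prop) (A : V -> Prop)
  : {x | A x} -> {x | A x} -> Prop :=
  fun a b => E (proj1_sig a) (proj1_sig b).

From Stdlib Require Import List Lia Classical ProofIrrelevance FinFun Wf_nat.
Import ListNotations.

(* Reflexivity gives |Γ(X)| = |X| + |∂X|, and Γ(X ∪ Y) = Γ(X) ∪ Γ(Y),
   Γ(X ∩ Y) ⊆ Γ(X) ∩ Γ(Y); by inclusion–exclusion the boundary is therefore
   submodular: |∂(X ∪ Y)| + |∂(X ∩ Y)| <= |∂X| + |∂Y|.  For two weak fragments
   that meet, both terms on the left are at least κ, so both equal κ.  Two
   distinct weak atoms that meet would have a strictly smaller fragment as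
   intersection.  Automorphisms map weak atoms to weak atoms, so under
   point-transitivity every point lies in one; an automorphism moving a point
   of an atom A to another point of A maps A to an atom meeting A, i.e. onto A,
   and hence restricts to an automorphism of Γ[A]. *)

Lemma exists_least_nat (P : nat -> Prop) :
  (exists n, P n) -> exists n, P n /\ forall m, P m -> n <= m.
Proof.
  intros HP.
  destruct (dec_inh_nat_subset_has_unique_least_element P (fun n => classic (P n)) HP)
    as [n [Hn _]].
  now exists n.
Qed.

Section FiniteSets.
Context {V : Type}.
Implicit Types X Y : V -> Prop.

Lemma finite_set_of_cover X (l : list V) : (forall x, X x -> In x l) -> finite_set X.
Proof.
  revert X; induction l as [|a l IH]; intros X HX.
  - exists 0, []; split; [constructor | split; [reflexivity |]].
    intros x; split; [intros Hx; exact (HX _ Hx) | intros []].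
  - destruct (IH (fun x => X x /\ x <> a)) as [n [l' [Hnd [Hlen Hin]]]].
    { intros x [Hx Hne]; destruct (HX x Hx); [congruence | assumption]. }
    destruct (classic (X a)) as [Ha | Ha].
    + exists (S n), (a :: l'); split; [| split].
      * constructor; [rewrite <- Hin; tauto | assumption].
      * simpl; lia.
      * intros x; simpl; rewrite <- Hin.
        destruct (classic (x = a)) as [-> | Hne]; [tauto |].
        split; [tauto | intros [<- | []]; auto].
    + exists n, l'; split; [assumption | split; [assumption |]].
      intros x; rewrite <- Hin.
      destruct (classic (x = a)) as [-> | Hne]; tauto.
Qed.

Lemma finite_set_sub X Y : finite_set Y -> (forall x, X x -> Y x) -> finite_set X.
Proof.
  intros [n [l [_ [_ Hl]]]] HXY.
  apply (finite_set_of_cover X l); intros x Hx; apply Hl, HXY, Hx.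
Qed.

Lemma finite_setU X Y : finite_set X -> finite_set Y -> finite_set (setU X Y).
Proof.
  intros [n [l [_ [_ Hl]]]] [m [l' [_ [_ Hl']]]].
  apply (finite_set_of_cover _ (l ++ l')).
  intros x [Hx | Hx]; apply in_or_app; [left; apply Hl | right; apply Hl']; assumption.
Qed.

Lemma has_card_le_sub X Y n m :
  (forall x, X x -> Y x) -> has_card X n -> has_card Y m -> n <= m.
Proof.
  intros HXY [l [Hnd [<- Hl]]] [l' [_ [<- Hl']]].
  apply NoDup_incl_length; [assumption |].
  intros x Hx; apply Hl', HXY, Hl, Hx.
Qed.

Lemma has_card_unique X n m : has_card X n -> has_card X m -> n = m.
Proof. intros; apply PeanoNat.Nat.le_antisymm; eapply has_card_le_sub; eauto. Qed.

Lemma has_card_sub_eq X Y n :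
  (forall x, X x -> Y x) -> has_card X n -> has_card Y n -> forall x, Y x -> X x.
Proof.
  intros HXY [l [Hnd [Hlen Hl]]] [l' [_ [Hlen' Hl']]] x Hy.
  apply Hl, (NoDup_length_incl (l' := l') Hnd); [lia | | apply Hl', Hy].
  intros z Hz; apply Hl', HXY, Hl, Hz.
Qed.

Lemma has_card_same_set X Y n : same_set X Y -> has_card X n -> has_card Y n.
Proof.
  intros HXY [l [Hnd [Hlen Hl]]].
  exists l; split; [assumption | split; [assumption |]].
  intros x; rewrite <- (HXY x); apply Hl.
Qed.

Lemma has_card_setU_disjoint X Y n m :
  disjoint X Y -> has_card X n -> has_card Y m -> has_card (setU X Y) (n + m).
Proof.
  intros HD [l [Hnd [<- Hl]]] [l' [Hnd' [<- Hl']]].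
  exists (l ++ l'); split; [| split].
  - apply NoDup_app; [assumption | assumption |].
    intros x Hx Hx'; apply (HD x); split; [apply Hl | apply Hl']; assumption.
  - apply length_app.
  - intros x; unfold setU; rewrite in_app_iff, Hl, Hl'; reflexivity.
Qed.

Lemma has_card_setU_setI X Y nx ny nu ni :
  has_card X nx -> has_card Y ny ->
  has_card (setU X Y) nu -> has_card (setI X Y) ni -> nu + ni = nx + ny.
Proof.
  intros Hx Hy Hu Hi.
  set (D := fun x => Y x /\ ~ X x).
  destruct (finite_set_sub D Y) as [d Hd]; [now exists ny | now intros x [] |].
  assert (HuD : nu = nx + d).
  { apply (has_card_unique _ _ _ Hu), (has_card_same_set (setU X D)).
    - intros x; unfold setU, D; destruct (classic (X x)); tauto.
    - apply has_card_setU_disjoint; [intros x [? []] | |]; auto. }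
  assert (HyD : ny = ni + d).
  { apply (has_card_unique _ _ _ Hy), (has_card_same_set (setU (setI X Y) D)).
    - intros x; unfold setU, setI, D; destruct (classic (X x)); tauto.
    - apply has_card_setU_disjoint; [intros x [[] []] | |]; auto. }
  lia.
Qed.

End FiniteSets.

Section Boundary.
Context {V : Type} (E : V -> V -> Prop).
Implicit Types X Y : V -> Prop.

Lemma finite_set_image X :
  (forall x, finite_set (E x)) -> finite_set X -> finite_set (image E X).
Proof.
  intros HE [n [l [_ [_ Hl]]]].
  assert (Himage_list : forall l0, finite_set (fun y => exists x, In x l0 /\ E x y)).
  { induction l0 as [| a l0 IH].
    - apply (finite_set_of_cover _ []); intros y [x [[] _]].
    - apply (finite_set_sub _ (setU (E a) (fun y => exists x, In x l0 /\ E x y))).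
      + apply finite_setU; [apply HE | exact IH].
      + intros y [x [[<- | Hx] Hxy]]; [left | right; exists x]; auto. }
  apply (finite_set_sub _ _ (Himage_list l)).
  intros y [x [Hx Hxy]]; exists x; split; [apply Hl |]; assumption.
Qed.

Lemma finite_set_boundary X :
  (forall x, finite_set (E x)) -> finite_set X -> finite_set (boundary E X).
Proof.
  intros HE HX; apply (finite_set_sub _ (image E X)); [apply finite_set_image; auto |].
  now intros y [].
Qed.

Hypothesis E_refl : reflexive_rel E.

Lemma has_card_image X n b :
  has_card X n -> has_card (boundary E X) b -> has_card (image E X) (n + b).
Proof.
  intros HX HB; apply (has_card_same_set (setU X (boundary E X))).
  - intros y; unfold setU, boundary; split.
    + intros [Hy | [Hy _]]; [exists y; split; [| apply E_refl] |]; assumption.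
    + intros Hy; destruct (classic (X y)); [left | right]; auto.
  - apply has_card_setU_disjoint; [intros y [H1 [_ H2]] | |]; auto.
Qed.

Lemma boundary_submodular X Y nx ny nu ni bx b_y bu bi :
  has_card X nx -> has_card Y ny -> has_card (setU X Y) nu -> has_card (setI X Y) ni ->
  has_card (boundary E X) bx -> has_card (boundary E Y) b_y ->
  has_card (boundary E (setU X Y)) bu -> has_card (boundary E (setI X Y)) bi ->
  bu + bi <= bx + b_y.
Proof.
  intros Hx Hy Hu Hi Bx By Bu Bi.
  pose proof (has_card_image _ _ _ Hx Bx) as Gx.
  pose proof (has_card_image _ _ _ Hy By) as Gy.
  destruct (finite_set_sub (setI (image E X) (image E Y)) (image E X)) as [c Gxy];
    [eexists; eauto | now intros z [] |].
  assert (Gu : has_card (setU (image E X) (image E Y)) (nu + bu)).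
  { apply (has_card_same_set (image E (setU X Y))); [| now apply has_card_image].
    intros z; unfold setU, image; split.
    - intros [x [[Hx' | Hx'] He]]; [left | right]; eauto.
    - intros [[x [Hx' He]] | [x [Hx' He]]]; eauto. }
  assert (Hic : ni + bi <= c).
  { apply (has_card_le_sub (image E (setI X Y)) (setI (image E X) (image E Y)));
      [| now apply has_card_image | exact Gxy].
    intros z [x [[H1 H2] He]]; split; exists x; auto. }
  pose proof (has_card_setU_setI _ _ _ _ _ _ Hx Hy Hu Hi).
  pose proof (has_card_setU_setI _ _ _ _ _ _ Gx Gy Gu Gxy).
  lia.
Qed.

End Boundary.

Section WeakFragments.
Context {V : Type} (E : V -> V -> Prop).
Hypothesis E_refl : reflexive_rel E.
Hypothesis E_lf : locally_finite E.
Implicit Types X Y F A : V -> Prop.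

Let finite_set_succ x : finite_set (E x) := proj1 (E_lf x).

Lemma weak_fragment_setU_setI F1 F2 :
  weak_fragment E F1 -> weak_fragment E F2 -> nonempty (setI F1 F2) ->
  weak_fragment E (setU F1 F2) /\ weak_fragment E (setI F1 F2).
Proof.
  intros [Hne1 [[n1 Hc1] [k [Hb1 Hmin]]]] [Hne2 [[n2 Hc2] [k2 [Hb2 Hmin2]]]] Hne.
  assert (Hk : k2 = k).
  { apply PeanoNat.Nat.le_antisymm;
      [apply (Hmin2 F1 _ Hne1) | apply (Hmin F2 _ Hne2)]; try (eexists; eassumption);
      assumption. }
  subst k2.
  assert (Hfrag : forall X, nonempty X -> finite_set X -> has_card (boundary E X) k ->
                           weak_fragment E X)
    by (intros X HX HfX HbX; split; [| split]; [assumption | assumption | now exists k]).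
  assert (Hfu : finite_set (setU F1 F2)) by (apply finite_setU; eexists; eauto).
  assert (Hfi : finite_set (setI F1 F2))
    by (apply (finite_set_sub _ F1); [eexists; eauto | now intros x []]).
  assert (Hneu : nonempty (setU F1 F2)) by (destruct Hne1 as [x]; exists x; now left).
  destruct (finite_set_boundary E _ finite_set_succ Hfu) as [bu Hbu].
  destruct (finite_set_boundary E _ finite_set_succ Hfi) as [bi Hbi].
  pose proof (Hmin _ _ Hneu Hfu Hbu).
  pose proof (Hmin _ _ Hne Hfi Hbi).
  destruct Hfu as [nu Hcu], Hfi as [ni Hci].
  pose proof (boundary_submodular E E_refl _ _ _ _ _ _ _ _ _ _
                Hc1 Hc2 Hcu Hci Hb1 Hb2 Hbu Hbi).
  split; apply Hfrag; try assumption; try (eexists; eassumption).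
  - now replace k with bu by lia.
  - now replace k with bi by lia.
Qed.

Lemma weak_atoms_meet_same_set A B :
  weak_atom E A -> weak_atom E B -> nonempty (setI A B) -> same_set A B.
Proof.
  intros [HA [a [Ha HminA]]] [HB [b [Hb HminB]]] Hne.
  destruct (weak_fragment_setU_setI A B HA HB Hne) as [_ HI].
  pose proof HI as [_ [[i Hi] _]].
  assert (a <= i) by (eapply HminA; eauto).
  assert (b <= i) by (eapply HminB; eauto).
  assert (i <= a) by (apply (has_card_le_sub (setI A B) A); auto; now intros x []).
  assert (i <= b) by (apply (has_card_le_sub (setI A B) B); auto; now intros x []).
  assert (HiA : forall x, A x -> setI A B x).
  { apply (has_card_sub_eq _ _ i); [now intros x [] | assumption |].
    now replace i with a by lia. }
  assert (HiB : forall x, B x -> setI A B x).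
  { apply (has_card_sub_eq _ _ i); [now intros x [] | assumption |].
    now replace i with b by lia. }
  intros x; split; intros Hx; [apply (HiA x Hx) | apply (HiB x Hx)].
Qed.

Lemma weak_atom_exists (x0 : V) : exists A, weak_atom E A.
Proof.
  destruct (exists_least_nat
              (fun m => exists Y, nonempty Y /\ finite_set Y /\ has_card (boundary E Y) m))
    as [k [[Y0 [HY0 [HfY0 HbY0]]] Hk]].
  { assert (Hf : finite_set (fun y => y = x0))
      by (apply (finite_set_of_cover _ [x0]); intros; now left).
    destruct (finite_set_boundary E _ finite_set_succ Hf) as [m Hm].
    exists m, (fun y => y = x0); repeat split; [now exists x0 | assumption | assumption]. }
  assert (HF0 : weak_fragment E Y0).
  { repeat split; try assumption; exists k; split; [assumption |].
    intros Y m H1 H2 H3; apply Hk; eauto. }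
  destruct (exists_least_nat (fun a => exists F, weak_fragment E F /\ has_card F a))
    as [a [[A [HA Ha]] Hmin]].
  { destruct HfY0 as [n Hn]; now exists n, Y0. }
  exists A; split; [assumption |].
  exists a; split; [assumption |]; intros F f HF Hf; apply Hmin; eauto.
Qed.

End WeakFragments.

Section Automorphism.
Context {V : Type} (E : V -> V -> Prop) (f g : V -> V).
Hypothesis gK : forall x, g (f x) = x.
Hypothesis fK : forall y, f (g y) = y.
Hypothesis f_rel : forall x y, E (f x) y <-> exists z, E x z /\ y = f z.
Implicit Types X A : V -> Prop.

(* [fun y => X (g y)] is the image of [X] under [f]. *)
Lemma has_card_preimage X n : has_card X n -> has_card (fun y => X (g y)) n.
Proof.
  intros [l [Hnd [Hlen Hl]]].
  exists (map f l); split; [| split].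
  - apply Injective_map_NoDup; [| assumption].
    intros x y Hxy; now rewrite <- (gK x), <- (gK y), Hxy.
  - now rewrite length_map.
  - intros y; rewrite in_map_iff; split.
    + intros Hy; exists (g y); split; [| apply Hl]; auto.
    + intros [x [<- Hx]]; rewrite gK; now apply Hl.
Qed.

Lemma boundary_preimage X :
  same_set (boundary E (fun y => X (g y))) (fun y => boundary E X (g y)).
Proof.
  intros y; unfold boundary, image; split.
  - intros [[x [Hx He]] Hn]; split; [| assumption].
    exists (g x); split; [assumption |].
    rewrite <- (fK x), f_rel in He; destruct He as [z [Hz ->]].
    now rewrite gK.
  - intros [[x [Hx He]] Hn]; split; [| assumption].
    exists (f x); rewrite gK; split; [assumption |].
    apply f_rel; now exists (g y).
Qed.

Lemma weak_fragment_preimage X : weak_fragment E X -> weak_fragment E (fun y => X (g y)).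
Proof.
  intros [[x Hx] [[n Hn] [k [Hk Hmin]]]].
  split; [exists (f x); now rewrite gK |].
  split; [exists n; now apply has_card_preimage |].
  exists k; split; [| assumption].
  apply (has_card_same_set (fun y => boundary E X (g y))).
  - intros y; symmetry; apply boundary_preimage.
  - now apply has_card_preimage.
Qed.

Lemma weak_atom_preimage A : weak_atom E A -> weak_atom E (fun y => A (g y)).
Proof.
  intros [HF [a [Ha Hmin]]].
  split; [now apply weak_fragment_preimage |].
  exists a; split; [now apply has_card_preimage | assumption].
Qed.

Lemma automorphism_induced A :
  (forall y, A (f y) <-> A y) ->
  exists h, automorphism (induced E A) h /\ forall s, proj1_sig (h s) = f (proj1_sig s).
Proof.
  intros HA.
  assert (Af : forall y, A y -> A (f y)) by (intros y; apply HA).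
  assert (Ag : forall y, A y -> A (g y)) by (intros y Hy; apply HA; now rewrite fK).
  exists (fun s => exist A (f (proj1_sig s)) (Af _ (proj2_sig s))).
  split; [| reflexivity].
  split.
  - exists (fun s => exist A (g (proj1_sig s)) (Ag _ (proj2_sig s))).
    split; intros [y Hy]; apply ProofIrrelevanceTheory.subset_eq_compat; simpl; auto.
  - intros [x Hx] [y Hy]; unfold induced; simpl; rewrite f_rel; split.
    + intros [z [Hz ->]].
      assert (Hz' : A z) by (rewrite <- (gK z); apply Ag, Hy).
      exists (exist A z Hz'); split; [assumption |].
      now apply ProofIrrelevanceTheory.subset_eq_compat.
    + intros [[z Hz] [Hxz Heq]]; exists z; split; [assumption |].
      exact (f_equal (@proj1_sig _ _) Heq).
Qed.

End Automorphism.

Section PointTransitive.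
Context {V : Type} (E : V -> V -> Prop).
Hypothesis E_refl : reflexive_rel E.
Hypothesis E_lf : locally_finite E.
Hypothesis E_pt : point_transitive E.

Lemma weak_atoms_cover x : exists A, weak_atom E A /\ A x.
Proof.
  destruct (weak_atom_exists E E_lf x) as [A HA].
  pose proof HA as [[[a Ha] _] _].
  destruct (E_pt a x) as [f [[[g [gK fK]] f_rel] <-]].
  exists (fun y => A (g y)); split; [now apply (weak_atom_preimage E f g) | now rewrite gK].
Qed.

Lemma weak_atom_automorphism_stable A a b :
  weak_atom E A -> A a -> A b ->
  exists f, automorphism E f /\ f a = b /\ forall y, A (f y) <-> A y.
Proof.
  intros HA Ha Hb.
  destruct (E_pt a b) as [f [[[g [gK fK]] f_rel] Hfa]].
  assert (Hg : same_set (fun y => A (g y)) A).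
  { apply (weak_atoms_meet_same_set E E_refl E_lf);
      [now apply (weak_atom_preimage E f g) | assumption |].
    exists b; split; [rewrite <- Hfa, gK |]; assumption. }
  exists f; split; [split; [now exists g | assumption] | split; [assumption |]].
  intros y; rewrite <- (Hg (f y)), gK; reflexivity.
Qed.

Lemma weak_atom_induced_point_transitive A :
  weak_atom E A -> point_transitive (induced E A).
Proof.
  intros HA [a Ha] [b Hb].
  destruct (weak_atom_automorphism_stable A a b HA Ha Hb)
    as [f [[[g [gK fK]] f_rel] [Hfa HfA]]].
  destruct (automorphism_induced E f g gK fK f_rel A HfA) as [h [Hh Hhf]].
  exists h; split; [assumption |].
  apply eq_sig_hprop; [intros; apply proof_irrelevance |].
  now rewrite Hhf.
Qed.

End PointTransitive.

Theorem proposition3p1 (V : Type) (E : V -> V -> Prop) :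
  reflexive_rel E -> locally_finite E ->
  (forall F1 F2 : V -> Prop,
      weak_fragment E F1 -> weak_fragment E F2 -> nonempty (setI F1 F2) ->
      weak_fragment E (setU F1 F2) /\ weak_fragment E (setI F1 F2)) /\
  (forall A B : V -> Prop,
      weak_atom E A -> weak_atom E B -> ~ same_set A B -> disjoint A B) /\
  (point_transitive E ->
     (forall x : V, exists A, weak_atom E A /\ A x) /\
     (forall A B : V -> Prop,
        weak_atom E A -> weak_atom E B -> same_set A B \/ disjoint A B) /\
     (forall A : V -> Prop, weak_atom E A -> point_transitive (induced E A))).
Proof.
  intros E_refl E_lf.
  assert (Hdisjoint : forall A B : V -> Prop,
             weak_atom E A -> weak_atom E B -> ~ same_set A B -> disjoint A B).
  { intros A B HA HB Hne x Hx; apply Hne.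
    apply (weak_atoms_meet_same_set E E_refl E_lf); [| | exists x]; assumption. }
  split; [exact (weak_fragment_setU_setI E E_refl E_lf) |].
  split; [exact Hdisjoint |].
  intros E_pt; split; [| split].
  - exact (weak_atoms_cover E E_lf E_pt).
  - intros A B HA HB; destruct (classic (same_set A B)); [left | right; apply Hdisjoint];
      assumption.
  - exact (weak_atom_induced_point_transitive E E_refl E_lf E_pt).
Qed.
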